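(* Let $q$ be a prime power and $1\le k\le n-1$. If $\mathcal{L}$ is a Cameron-Liebler $k$-set of $\mathrm{AG}(n,q)$ with parameter $x$, then $\mathcal{L}$, viewed as a set of $k$-spaces of the projective closure $\mathrm{PG}(n,q)$ of $\mathrm{AG}(n,q)$, is a Cameron-Liebler $k$-set of $\mathrm{PG}(n,q)$ with parameter $x$.
   Context: A $k$-space is a $k$-dimensional projective subspace. For integers $a,b\ge 0$, $\left[{a\atop b}\right]_q=\frac{(q^a-1)\cdots(q^{a-b+1}-1)}{(q^b-1)\cdots(q-1)}$ (and $0$ if $b>a$). The affine space $\mathrm{AG}(n,q)$ is $\mathrm{PG}(n,q)$ with a hyperplane $\pi_\infty$ (hyperplane at infinity) removed; affine points are points outside $\pi_\infty$, affine $k$-spaces are $k$-spaces of $\mathrm{PG}(n,q)$ not contained in $\pi_\infty$. Let $P_n$ be the point-($k$-space) incidence matrix of $\mathrm{PG}(n,q)$ and $A_n$ the incidence matrix of affine points versus affine $k$-spaces. A set $\mathcal{L}$ of $k$-spaces of $\mathrm{PG}(n,q)$ is a Cameron-Liebler $k$-set of $\mathrm{PG}(n,q)$ if its characteristic vector lies in the real row space $\mathrm{Im}(P_n^T)$, with parameter $|\mathcal{L}|/\left[{n\atop k}\right]_q$. A set of affine $k$-spaces is a Cameron-Liebler $k$-set of $\mathrm{AG}(n,q)$ if its characteristic vector lies in $\mathrm{Im}(A_n^T)$, with parameter $|\mathcal{L}|/\left[{n\atop k}\right]_q$. *)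

(* Projective geometry PG(n,q) modelled inside the row space
   'rV[F]_(n.+1) of a finite field F with #|F| = q.  A projective d-space is a
   (d+1)-dimensional vector subspace, represented canonically by the square
   matrix A with <<A>>%MS = A (the canonical generator of its row space). *)
From HB Require Import structures.
From mathcomp Require Import all_boot all_order all_algebra.
From mathcomp Require Import reals.
Unset Printing Implicit Defensive.
Import Order.TTheory GRing.Theory Num.Theory.
Local Open Scope ring_scope.

Definition vsubsp (F : finFieldType) (n d : nat) : {set 'M[F]_(n.+1)} :=
  [set A : 'M[F]_(n.+1) | (<<A>>%MS == A) && (\rank A == d)%N].

Definition pg_points (F : finFieldType) (n : nat) := vsubsp F n 1.
Definition pg_kspaces (F : finFieldType) (n k : nat) := vsubsp F n k.+1.
Definition pg_hyperplanes (F : finFieldType) (n : nat) := vsubsp F n n.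

Definition incident (F : finFieldType) (n : nat) (A B : 'M[F]_(n.+1)) : bool :=
  (A <= B)%MS.

(* affine objects w.r.t. the hyperplane at infinity H: not contained in H *)
Definition ag_points (F : finFieldType) (n : nat) (H : 'M[F]_(n.+1)) :=
  [set P in pg_points F n | ~~ incident F n P H].
Definition ag_kspaces (F : finFieldType) (n k : nat) (H : 'M[F]_(n.+1)) :=
  [set K in pg_kspaces F n k | ~~ incident F n K H].

Definition gauss_binom (R : realFieldType) (q a b : nat) : R :=
  if (b <= a)%N then
    (\prod_(i < b) ((q ^ (a - i))%:R - 1)) / (\prod_(i < b) ((q ^ i.+1)%:R - 1))
  else 0.

(* char. vector of L lies in Im(P_n^T): there is a real vector v indexed by
   points with (P_n^T v)_K = chi_L(K) for every k-space K. *)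
Definition CL_PG (R : realType) (F : finFieldType) (n k : nat)
    (L : {set 'M[F]_(n.+1)}) : Prop :=
  L \subset pg_kspaces F n k /\
  exists v : 'M[F]_(n.+1) -> R,
    forall K, K \in pg_kspaces F n k ->
      ((K \in L)%:R : R) = \sum_(P in pg_points F n | incident F n P K) v P.

Definition CL_PG_param (R : realType) (F : finFieldType) (n k : nat)
    (L : {set 'M[F]_(n.+1)}) (x : R) : Prop :=
  @CL_PG R F n k L /\ x = #|L|%:R / gauss_binom R #|F| n k.

(* char. vector of L (indexed by affine k-spaces) lies in Im(A_n^T). *)
Definition CL_AG (R : realType) (F : finFieldType) (n k : nat)
    (H : 'M[F]_(n.+1)) (L : {set 'M[F]_(n.+1)}) : Prop :=
  L \subset ag_kspaces F n k H /\
  exists v : 'M[F]_(n.+1) -> R,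
    forall K, K \in ag_kspaces F n k H ->
      ((K \in L)%:R : R) = \sum_(P in ag_points F n H | incident F n P K) v P.

Definition CL_AG_param (R : realType) (F : finFieldType) (n k : nat)
    (H : 'M[F]_(n.+1)) (L : {set 'M[F]_(n.+1)}) (x : R) : Prop :=
  @CL_AG R F n k H L /\ x = #|L|%:R / gauss_binom R #|F| n k.

(* Extend a weight vector on the affine points by zero on the points at
   infinity.  An affine k-space then receives the same weight sum as before,
   while a k-space inside the hyperplane at infinity receives 0, which is its
   membership value since L consists of affine k-spaces only.  The parameter is
   given by the same formula in both geometries. *)
From HB Require Import structures.
From mathcomp Require Import all_boot all_order all_algebra.
From mathcomp Require Import reals.
Import GRing.Theory Num.Theory.
Local Open Scope ring_scope.

Lemma ag_kspaces_sub (F : finFieldType) (n k : nat) (H : 'M[F]_(n.+1)) :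
  ag_kspaces F n k H \subset pg_kspaces F n k.
Proof. by apply/subsetP=> K; rewrite inE => /andP[]. Qed.

Section ExtendByZero.

Variables (V : nmodType) (F : finFieldType) (n : nat) (H : 'M[F]_(n.+1)).
Variable v : 'M[F]_(n.+1) -> V.

Definition extend_by_zero (P : 'M[F]_(n.+1)) : V :=
  if incident F n P H then 0 else v P.

Lemma sum_extend_by_zero (K : 'M[F]_(n.+1)) :
  \sum_(P in pg_points F n | incident F n P K) extend_by_zero P =
  \sum_(P in ag_points F n H | incident F n P K) v P.
Proof.
rewrite (bigID (fun P => incident F n P H)) /= big1 ?add0r; last first.
  by move=> P /andP[_ PH]; rewrite /extend_by_zero PH.
apply: eq_big => [P | P /andP[_ PH]]; last by rewrite /extend_by_zero (negbTE PH).
by rewrite [P \in ag_points _ _ _]inE andbAC.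
Qed.

Lemma sum_extend_by_zero_at_infinity (K : 'M[F]_(n.+1)) :
  incident F n K H ->
  \sum_(P in pg_points F n | incident F n P K) extend_by_zero P = 0.
Proof.
move=> KH; apply: big1 => P /andP[_ PK].
by rewrite /extend_by_zero /incident (submx_trans PK KH).
Qed.

End ExtendByZero.

Arguments extend_by_zero {V F n} H v P.

Lemma CL_AG_CL_PG (R : realType) (F : finFieldType) (n k : nat)
    (H : 'M[F]_(n.+1)) (L : {set 'M[F]_(n.+1)}) :
  @CL_AG R F n k H L -> @CL_PG R F n k L.
Proof.
move=> [LA [v hv]]; split; first exact: subset_trans LA (ag_kspaces_sub _ _ _ _).
exists (extend_by_zero H v) => K hK.
have [KH | KnH] := boolP (incident F n K H).
  rewrite sum_extend_by_zero_at_infinity //.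
  apply/eqP; rewrite pnatr_eq0 eqb0; apply: contraTN KH => /(subsetP LA).
  by rewrite inE => /andP[].
by rewrite sum_extend_by_zero hv // inE hK.
Qed.

Theorem theorem1p2 (R : realType) (F : finFieldType) (q n k : nat)
    (H : 'M[F]_(n.+1)) (L : {set 'M[F]_(n.+1)}) (x : R) :
  q = #|F| ->
  (1 <= k <= n - 1)%N ->
  H \in pg_hyperplanes F n ->
  @CL_AG_param R F n k H L x ->
  @CL_PG_param R F n k L x.
Proof.
by move=> _ _ _ [/CL_AG_CL_PG hL hx].
Qed.
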